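(* Let $\Gamma$ be a set of basic relations of Allen's interval algebra. If $\mathsf{m}\in\Gamma$, then $\Gamma$ implements $\mathsf{p}$. If $\mathsf{f}\in\Gamma$ and $\mathsf{s}\in\Gamma$, then $\Gamma$ implements $\mathsf{d}$ and $\Gamma$ implements $\mathsf{o}$.
   Context: Allen's interval algebra has domain $\mathbb{I}=\{[a,b] : a,b\in\mathbb{Q},\ a<b\}$; for $I=[a,b]$ write $I^-=a$, $I^+=b$. Relations: $x\,\mathsf{p}\,y$ iff $x^+<y^-$; $x\,\mathsf{m}\,y$ iff $x^+=y^-$; $x\,\mathsf{o}\,y$ iff $x^-<y^-<x^+<y^+$; $x\,\mathsf{d}\,y$ iff $y^-<x^-$ and $x^+<y^+$; $x\,\mathsf{s}\,y$ iff $x^-=y^-$ and $x^+<y^+$; $x\,\mathsf{f}\,y$ iff $x^+=y^+$ and $y^-<x^-$. A (simple) implementation of a binary relation $r$ in a constraint language $\Gamma$ is a CSP instance $\mathcal{C}_r$ over $\Gamma$ with primary variables $x_1,x_2$ and possibly auxiliary variables $y_1,\dots,y_\ell$ such that (i) every assignment satisfying $\mathcal{C}_r$ satisfies $x_1\,r\,x_2$, and (ii) every assignment to $x_1,x_2$ not satisfying $x_1\,r\,x_2$ can be extended to $y_1,\dots,y_\ell$ so that all but one constraint of $\mathcal{C}_r$ are satisfied. $\Gamma$ implements $r$ if such an implementation exists. *)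

From HB Require Import structures.
From mathcomp Require Import all_boot all_order all_algebra.
Set Implicit Arguments. Unset Strict Implicit. Unset Printing Implicit Defensive.
Import Order.TTheory GRing.Theory Num.Theory.
Local Open Scope ring_scope.

(* An interval [a,b] with a,b rational and a < b; lo I = I^-, hi I = I^+. *)
Record interval := Interval { lo : rat; hi : rat; lo_lt_hi : lo < hi }.

Inductive basic := Bp | Bm | Bo | Bd | Bs | Bf
                 | Bpi | Bmi | Boi | Bdi | Bsi | Bfi | Beq.

Definition rel_p (x y : interval) : bool := hi x < lo y.
Definition rel_m (x y : interval) : bool := hi x == lo y.
Definition rel_o (x y : interval) : bool :=
  [&& lo x < lo y, lo y < hi x & hi x < hi y].
Definition rel_d (x y : interval) : bool := (lo y < lo x) && (hi x < hi y).
Definition rel_s (x y : interval) : bool := (lo x == lo y) && (hi x < hi y).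
Definition rel_f (x y : interval) : bool := (hi x == hi y) && (lo y < lo x).
Definition rel_eq (x y : interval) : bool := (lo x == lo y) && (hi x == hi y).

Definition rel_of (b : basic) : interval -> interval -> bool :=
  match b with
  | Bp => rel_p | Bm => rel_m | Bo => rel_o | Bd => rel_d | Bs => rel_s | Bf => rel_f
  | Bpi => fun x y => rel_p y x | Bmi => fun x y => rel_m y x
  | Boi => fun x y => rel_o y x | Bdi => fun x y => rel_d y x
  | Bsi => fun x y => rel_s y x | Bfi => fun x y => rel_f y x
  | Beq => rel_eq
  end.

Record constraint (n : nat) := Constraint { crel : basic; cfst : 'I_n; csnd : 'I_n }.

Definition sat (n : nat) (alpha : 'I_n -> interval) (c : constraint n) : bool :=
  rel_of (crel c) (alpha (cfst c)) (alpha (csnd c)).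

(* Simple implementation of r in Gamma: a CSP instance over Gamma with
   variables 'I_(l.+2); primary variables x1 = index 0, x2 = index 1,
   auxiliary variables y1..yl = indices 2..l+1. *)
Definition implements (Gamma : pred basic) (r : interval -> interval -> bool) : Prop :=
  exists (l : nat) (C : seq (constraint l.+2)),
    all (fun c => Gamma (crel c)) C /\
    (forall alpha : 'I_l.+2 -> interval,
        all (sat alpha) C -> r (alpha ord0) (alpha (inord 1))) /\
    (forall x1 x2 : interval, ~~ r x1 x2 ->
        exists alpha : 'I_l.+2 -> interval,
          [/\ alpha ord0 = x1, alpha (inord 1) = x2 &
              count (fun c => ~~ sat alpha c) C = 1%N]).

From Pilot Require Import Defs.
From mathcomp Require Import all_boot all_order all_algebra.
From mathcomp Require Import lra.
Import Order.TTheory GRing.Theory Num.Theory.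
Local Open Scope ring_scope.

(* Each of p, d, o contains a composition of two relations of Gamma through one
   auxiliary interval y: x1 m y m x2 forces x1 p x2, x1 f y s x2 forces x1 d x2,
   and y f x1 together with y s x2 forces x1 o x2.  In each case the first link
   can always be satisfied by a suitable y, whatever x1 is; if x1 r x2 fails,
   the second link must then fail, so exactly one constraint is violated. *)

Lemma rel_p_of_m_m x y z : rel_m x y -> rel_m y z -> rel_p x z.
Proof. rewrite /rel_m /rel_p => /eqP xy /eqP yz; have := lo_lt_hi y; lra. Qed.

Lemma rel_d_of_f_s x y z : rel_f x y -> rel_s y z -> rel_d x z.
Proof.
rewrite /rel_f /rel_s /rel_d => /andP[/eqP xy yx] /andP[/eqP yz zy].
by apply/andP; split; lra.
Qed.

Lemma rel_o_of_f_s x y z : rel_f y x -> rel_s y z -> rel_o x z.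
Proof.
have := lo_lt_hi y; rewrite /rel_f /rel_s /rel_o.
by move=> y_lt /andP[/eqP yx xy] /andP[/eqP yz zy]; apply/and3P; split; lra.
Qed.

Lemma rel_m_exists x : exists y, rel_m x y.
Proof.
have hi_lt : hi x < hi x + 1 by lra.
by exists (Defs.Interval hi_lt); rewrite /rel_m.
Qed.

Lemma rel_f_exists x : exists y, rel_f x y.
Proof.
have lo_lt : lo x - 1 < hi x by have := lo_lt_hi x; lra.
by exists (Defs.Interval lo_lt); rewrite /rel_f /= eqxx; lra.
Qed.

Lemma rel_f_exists_inv x : exists y, rel_f y x.
Proof.
have [mid_gt mid_lt] := midf_lt (lo_lt_hi x).
by exists (Defs.Interval mid_lt); rewrite /rel_f /= eqxx.
Qed.

Definition assign3 (x1 x2 y : Defs.interval) (i : 'I_3) : Defs.interval :=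
  match val i with 0%N => x1 | 1%N => x2 | _ => y end.

Lemma assign3_inord1 x1 x2 y : assign3 x1 x2 y (inord 1) = x2.
Proof. by rewrite /assign3 /= inordK. Qed.

Lemma assign3_eta (alpha : 'I_3 -> Defs.interval) :
  assign3 (alpha ord0) (alpha (inord 1)) (alpha ord_max) =1 alpha.
Proof.
by case=> [[|[|[|//]]] i_lt] //=; congr alpha; apply/val_inj; rewrite /= ?inordK.
Qed.

Lemma implements_by_one_aux (Gamma : pred basic)
    (r : Defs.interval -> Defs.interval -> bool) (c1 c2 : constraint 3) :
  Gamma (crel c1) -> Gamma (crel c2) ->
  (forall x1 x2 y, sat (assign3 x1 x2 y) c1 -> sat (assign3 x1 x2 y) c2 -> r x1 x2) ->
  (forall x1 x2, exists y, sat (assign3 x1 x2 y) c1) ->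
  implements Gamma r.
Proof.
move=> Gc1 Gc2 sound first_link; exists 1%N, [:: c1; c2].
split; first by rewrite /= Gc1 Gc2.
split=> [alpha | x1 x2 not_r].
  set beta := assign3 (alpha ord0) (alpha (inord 1)) (alpha ord_max).
  have sat_eta c : sat alpha c = sat beta c by rewrite /sat /beta !assign3_eta.
  by rewrite /= andbT !sat_eta => /andP[]; apply: sound.
have [y sat1] := first_link x1 x2.
exists (assign3 x1 x2 y); split; rewrite ?assign3_inord1 //=.
have sat2 : ~~ sat (assign3 x1 x2 y) c2.
  by apply: contra not_r; apply: sound.
by rewrite sat1 sat2.
Qed.

Lemma implements_p (Gamma : pred basic) : Gamma Bm -> implements Gamma rel_p.
Proof.
move=> Gm; apply: (@implements_by_one_aux _ _
  (Constraint Bm ord0 ord_max) (Constraint Bm ord_max (inord 1))) => //.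
- by move=> x1 x2 y; rewrite /sat /= assign3_inord1; apply: rel_p_of_m_m.
- by move=> x1 x2; apply: rel_m_exists.
Qed.

Lemma implements_d (Gamma : pred basic) :
  Gamma Bf -> Gamma Bs -> implements Gamma rel_d.
Proof.
move=> Gf Gs; apply: (@implements_by_one_aux _ _
  (Constraint Bf ord0 ord_max) (Constraint Bs ord_max (inord 1))) => //.
- by move=> x1 x2 y; rewrite /sat /= assign3_inord1; apply: rel_d_of_f_s.
- by move=> x1 x2; apply: rel_f_exists.
Qed.

Lemma implements_o (Gamma : pred basic) :
  Gamma Bf -> Gamma Bs -> implements Gamma rel_o.
Proof.
move=> Gf Gs; apply: (@implements_by_one_aux _ _
  (Constraint Bf ord_max ord0) (Constraint Bs ord_max (inord 1))) => //.
- by move=> x1 x2 y; rewrite /sat /= assign3_inord1; apply: rel_o_of_f_s.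
- by move=> x1 x2; apply: rel_f_exists_inv.
Qed.

Theorem mainTheorem6 (Gamma : pred basic) :
  (Gamma Bm -> implements Gamma rel_p) /\
  (Gamma Bf -> Gamma Bs -> implements Gamma rel_d /\ implements Gamma rel_o).
Proof.
split; first exact: implements_p.
by move=> Gf Gs; split; [apply: implements_d | apply: implements_o].
Qed.
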